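(* Let $V$ be a fixed set of $n$ vertices and $\epsilon>0$. Consider the algorithm ALG that, given a private edge set $E$ on $V$, sets $V_1=V$, $E_1=E$ and for $i=1,\dots,n$: lets $w_i=(4/\epsilon)\sqrt{n/(n-i+1)}$, picks a vertex $v\in V_i$ with probability proportional to $d_{E_i}(v)+w_i$, outputs $v$, and sets $V_{i+1}=V_i\setminus\{v\}$ and $E_{i+1}=E_i$ minus all edges incident to $v$. The output is thus a permutation of $V$. Then ALG is $\epsilon$-differentially private: for any two edge sets $A,B$ on $V$ whose symmetric difference is a single edge and any set $\mathcal{P}$ of permutations, $\Pr[\mathrm{ALG}(A)\in\mathcal{P}]\le e^{\epsilon}\Pr[\mathrm{ALG}(B)\in\mathcal{P}]$.
   Context: $d_{E_i}(v)$ denotes the number of edges in $E_i$ incident to $v$. *)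

From mathcomp Require Import all_boot all_order all_algebra.
From mathcomp Require Import reals.
From mathcomp Require Import sequences.
Set Implicit Arguments. Unset Strict Implicit. Unset Printing Implicit Defensive.
Import Order.TTheory GRing.Theory Num.Theory.
Local Open Scope ring_scope.

Definition is_edge_set (T : finType) (E : {set {set T}}) : Prop :=
  forall e, e \in E -> #|e| = 2%N.

Definition deg (T : finType) (E : {set {set T}}) (v : T) : nat :=
  #|[set e in E | v \in e]|.

Definition remove_incident (T : finType) (E : {set {set T}}) (v : T) :=
  [set e in E | v \notin e].

Definition wgt (R : realType) (eps : R) (n i : nat) : R :=
  4 / eps * Num.sqrt (n%:R / (n - i + 1)%N%:R).

(* Probability that ALG, currently at step i with remaining vertices Vi and
   edges Ei, outputs the sequence s of vertices (next ones, in order). *)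
Fixpoint alg_prob (R : realType) (eps : R) (T : finType) (i : nat)
    (Vi : {set T}) (Ei : {set {set T}}) (s : seq T) : R :=
  match s with
  | [::] => 1
  | v :: s' =>
      if v \in Vi then
        ((deg Ei v)%:R + wgt eps #|T| i) /
          (\sum_(u in Vi) ((deg Ei u)%:R + wgt eps #|T| i)) *
        alg_prob eps i.+1 (Vi :\ v) (remove_incident Ei v) s'
      else 0
  end.

(* Pr[ALG(E) in P], an output ordering being a #|T|-tuple of vertices
   (non-permutation tuples get probability 0). *)
Definition alg_Pr (R : realType) (eps : R) (T : finType) (E : {set {set T}})
    (P : {set #|T|.-tuple T}) : R :=
  \sum_(t in P) alg_prob eps 1 [set: T] E t.

From mathcomp Require Import all_boot all_order all_algebra.
From mathcomp Require Import reals sequences exp ring lra zify.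
Import Order.TTheory GRing.Theory Num.Theory.
Set Implicit Arguments. Unset Strict Implicit.
Local Open Scope ring_scope.

(* Adding an edge e to E changes the probabilities of a given output order
   only at the steps before the first endpoint of e is removed.  If e is
   added, the one step at which an endpoint of e is picked gains at most a
   factor 1 + 1/w_i <= 1 + eps/4, and every other step only loses.  If e is
   removed, each step with k remaining vertices gains at most a factor
   (S + 2)/S <= 1 + 2/(k w_i) = 1 + eps/(2 sqrt(n k)), and the product of
   these factors is at most exp (eps/(2 sqrt n) * sum_k 1/sqrt k) <= exp eps. *)

Section EdgeSets.
Variable T : finType.
Implicit Types (E : {set {set T}}) (e V : {set T}) (u v : T).

Lemma deg_setU1 E e u :
  e \notin E -> deg (e |: E) u = (deg E u + (u \in e))%N.
Proof.
move=> eE; rewrite /deg; case: (boolP (u \in e)) => ue; last first.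
  rewrite addn0; apply: eq_card => f; rewrite !inE.
  case: eqP => // ->; by rewrite (negbTE ue) !andbF.
have ->: [set f in e |: E | u \in f] = e |: [set f in E | u \in f].
  by apply/setP=> f; rewrite !inE; case: eqP => // ->; rewrite ue.
by rewrite cardsU1 inE (negbTE eE) addnC.
Qed.

Lemma remove_incident_setU1 E e v :
  remove_incident (e |: E) v =
  if v \in e then remove_incident E v else e |: remove_incident E v.
Proof.
apply/setP=> f; case: (boolP (v \in e)) => ve; rewrite !inE;
  by case: (f =P e) => [->|] //=; rewrite ?ve ?andbF.
Qed.

Lemma notin_remove_incident E e v :
  e \notin E -> e \notin remove_incident E v.
Proof. by move=> eE; rewrite inE (negbTE eE). Qed.

Lemma sum_mem_le_card V e : (\sum_(u in V) (u \in e) <= #|e|)%N.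
Proof.
rewrite -sum1_card big_mkcond [X in (_ <= X)%N]big_mkcond /=.
by apply: leq_sum => u _; case: (u \in V); case: (u \in e).
Qed.

Lemma symdiff_set1 E F e :
  (E :\: F) :|: (F :\: E) = [set e] ->
  (e \notin F /\ E = e |: F) \/ (e \notin E /\ F = e |: E).
Proof.
move=> dEF; have mem_e f : (f \in E) != (f \in F) = (f == e).
  by have := congr1 (fun X : {set {set T}} => f \in X) dEF; rewrite !inE;
     case: (f \in E); case: (f \in F).
have := mem_e e; rewrite eqxx.
case: (boolP (e \in E)) => eE; case: (boolP (e \in F)) => eF //= _;
  [left | right]; split=> //; apply/setP=> f; rewrite !inE; have := mem_e f;
  by case: (f =P e) => [->|_]; rewrite ?eE ?eF //;
     case: (f \in E); case: (f \in F).
Qed.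

End EdgeSets.

Lemma prod1D_le_expR_sum (R : realType) (I : finType) (x : I -> R) :
  (forall i, 0 <= x i) -> \prod_i (1 + x i) <= expR (\sum_i x i).
Proof.
move=> x_ge0; rewrite expR_sum; apply: ler_prod => i _.
by rewrite expR_ge1Dx andbT addr_ge0.
Qed.

Lemma invr_sqrt_le (R : realType) (k : nat) :
  (Num.sqrt k.+1%:R)^-1 <= 2 * (Num.sqrt k.+1%:R - Num.sqrt k%:R :> R).
Proof.
set a := Num.sqrt (k%:R : R); set b := Num.sqrt (k.+1%:R : R).
have a_ge0 : 0 <= a by apply: sqrtr_ge0.
have b_gt0 : 0 < b by rewrite sqrtr_gt0 ltr0n.
have b2 : b * b = a * a + 1.
  by rewrite -!expr2 !sqr_sqrtr ?ler0n // -natr1.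
rewrite -(ler_pM2r b_gt0) mulVf ?gt_eqF //; nra.
Qed.

Lemma sum_invr_sqrt_le (R : realType) (k : nat) :
  \sum_(m < k) (Num.sqrt m.+1%:R)^-1 <= 2 * Num.sqrt k%:R :> R.
Proof.
have := telescope_sumr (fun m => Num.sqrt (m%:R : R)) (leq0n k).
rewrite /= sqrtr0 subr0 => <-; rewrite mulr_sumr big_mkord.
by apply: ler_sum => m _; apply: invr_sqrt_le.
Qed.

Section Algorithm.
Variables (R : realType) (eps : R) (T : finType).
Hypothesis eps_gt0 : 0 < eps.
Local Notation n := #|T|.
Implicit Types (E : {set {set T}}) (e V : {set T}) (v : T) (s : seq T).

Definition pick_weight i E v : R := (deg E v)%:R + wgt eps n i.

Definition pick_prob i V E v : R :=
  pick_weight i E v / \sum_(u in V) pick_weight i E u.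

Lemma alg_prob_cons i V E v s :
  alg_prob eps i V E (v :: s) =
  if v \in V then pick_prob i V E v *
                  alg_prob eps i.+1 (V :\ v) (remove_incident E v) s
  else 0.
Proof. by []. Qed.

Lemma wgt_ge0 i : 0 <= wgt eps n i.
Proof. by rewrite mulr_ge0 ?sqrtr_ge0 // divr_ge0 // ltW. Qed.

Lemma wgt_ge i : (0 < n)%N -> (0 < i)%N -> 4 / eps <= wgt eps n i.
Proof.
move=> n_gt0 i_gt0; rewrite -[X in X <= _]mulr1.
apply: ler_wpM2l; first by rewrite divr_ge0 ?ltW.
rewrite -[X in X <= _]sqrtr1 ler_sqrt ?divr_ge0 ?ler0n //.
by rewrite ler_pdivlMr ?mul1r ?ltr0n ?ler_nat; lia.
Qed.

(* With k = n - i + 1 vertices left, removing an edge raises the probability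
   of a step by at most the factor 1 + 2 / (k w_i), and w_i is chosen to make
   this 1 + removal_loss k. *)
Definition removal_loss (k : nat) : R :=
  eps / (2 * Num.sqrt n%:R * Num.sqrt k%:R).

Lemma removal_lossE i k : (0 < k)%N -> (0 < i)%N -> (k + i = n + 1)%N ->
  2 / (k%:R * wgt eps n i) = removal_loss k.
Proof.
move=> k_gt0 i_gt0 kiE; rewrite /removal_loss /wgt.
have -> : (n - i + 1)%N = k by lia.
have sk_gt0 : 0 < Num.sqrt (k%:R : R) by rewrite sqrtr_gt0 ltr0n.
have sn_gt0 : 0 < Num.sqrt (n%:R : R) by rewrite sqrtr_gt0 ltr0n; lia.
rewrite sqrtrM ?ler0n // sqrtrV ?ler0n //.
rewrite -[X in X * (_ * _)](@sqr_sqrtr _ k%:R) ?ler0n //.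
by field; rewrite !gt_eqF.
Qed.

Lemma removal_loss_ge0 k : 0 <= removal_loss k.
Proof. by apply: divr_ge0; [exact: ltW | rewrite !mulr_ge0 ?sqrtr_ge0]. Qed.

Definition removal_factor (k : nat) : R :=
  \prod_(m < k) (1 + removal_loss m.+1).

Lemma removal_factor_ge1 k : 1 <= removal_factor k.
Proof.
apply: (big_ind (fun x => 1 <= x)) => //; first exact: mulr_ege1.
by move=> m _; rewrite lerDl removal_loss_ge0.
Qed.

Lemma removal_factorS k :
  removal_factor k.+1 = removal_factor k * (1 + removal_loss k.+1).
Proof. exact: big_ord_recr. Qed.

Lemma removal_factor_le_expR : removal_factor n <= expR eps.
Proof.
apply: le_trans (prod1D_le_expR_sum (fun _ => removal_loss_ge0 _)) _.
rewrite ler_expR /removal_loss.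
under eq_bigr do rewrite invfM mulrA.
rewrite -mulr_sumr; case: (posnP n) => [->|n_gt0].
  by rewrite big_ord0 mulr0 ltW.
have sn_gt0 : 0 < Num.sqrt (n%:R : R) by rewrite sqrtr_gt0 ltr0n.
apply: le_trans (ler_wpM2l _ (sum_invr_sqrt_le _ _)) _.
  by apply: divr_ge0; [exact: ltW | rewrite mulr_ge0 ?sqrtr_ge0].
by rewrite mulfVK // mulf_neq0 ?gt_eqF.
Qed.

Lemma pick_weight_ge0 i E v : 0 <= pick_weight i E v.
Proof. by rewrite addr_ge0 ?wgt_ge0. Qed.

Lemma card_wgt_le_sum i V E :
  #|V|%:R * wgt eps n i <= \sum_(u in V) pick_weight i E u.
Proof. by rewrite mulr_natl -sumr_const ler_sum // => u _; rewrite lerDr. Qed.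

Lemma sum_pick_weight_setU1 i V E e : e \notin E ->
  \sum_(u in V) pick_weight i (e |: E) u =
  \sum_(u in V) pick_weight i E u + (\sum_(u in V) (u \in e))%N%:R.
Proof.
move=> eE; rewrite natr_sum -big_split; apply: eq_bigr => u _.
by rewrite /pick_weight deg_setU1 // natrD addrAC.
Qed.

Lemma pick_prob_ge0 i V E v : 0 <= pick_prob i V E v.
Proof.
by rewrite divr_ge0 ?pick_weight_ge0 ?sumr_ge0 // => u _;
   apply: pick_weight_ge0.
Qed.

Lemma alg_prob_ge0 i V E s : 0 <= alg_prob eps i V E s.
Proof.
elim: s i V E => [|v s IH] i V E //; rewrite alg_prob_cons.
by case: ifP => // _; apply: mulr_ge0 (pick_prob_ge0 _ _ _ _) (IH _ _ _).
Qed.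

Lemma sum_pick_weight_gt0 i V E v : v \in V -> 0 < wgt eps n i ->
  0 < \sum_(u in V) pick_weight i E u.
Proof.
move=> vV w_gt0; apply: lt_le_trans (card_wgt_le_sum _ _ _).
by rewrite mulr_gt0 // ltr0n; apply/card_gt0P; exists v.
Qed.

Lemma pick_prob_setU1 i V E e v : e \notin E ->
  pick_prob i V (e |: E) v =
  (pick_weight i E v + (v \in e)%:R) /
  (\sum_(u in V) pick_weight i E u + (\sum_(u in V) (u \in e))%N%:R).
Proof.
move=> eE; rewrite /pick_prob sum_pick_weight_setU1 //.
by rewrite /pick_weight deg_setU1 // natrD addrAC.
Qed.

Lemma pick_prob_setU1_le i V E e v :
  e \notin E -> v \in V -> 0 < wgt eps n i ->
  pick_prob i V (e |: E) v <=
  (1 + (v \in e)%:R / wgt eps n i) * pick_prob i V E v.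
Proof.
move=> eE vV w_gt0; rewrite pick_prob_setU1 // /pick_prob mulrA.
have S_gt0 := sum_pick_weight_gt0 E vV w_gt0.
set d := pick_weight i E v; set b : R := (v \in e)%:R; set w := wgt eps n i.
set S := \sum_(u in V) _; set c : R := (\sum_(u in V) (u \in e))%N%:R.
have w_le_d : w <= d by rewrite lerDr.
have Sc_gt0 : 0 < S + c by rewrite ltr_wpDr ?ler0n.
apply: ler_pM.
- by rewrite addr_ge0 ?pick_weight_ge0 ?ler0n.
- by rewrite invr_ge0 ltW.
- rewrite mulrDl mul1r lerD2l mulrAC ler_pdivlMr //.
  by rewrite ler_wpM2l ?ler0n.
- by rewrite lef_pV2 ?posrE // lerDl ler0n.
Qed.

Lemma pick_prob_le_setU1 i V E e v :
  #|e| = 2%N -> e \notin E -> v \in V -> 0 < wgt eps n i ->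
  pick_prob i V E v <=
  (1 + 2 / (#|V|%:R * wgt eps n i)) * pick_prob i V (e |: E) v.
Proof.
move=> e2 eE vV w_gt0; rewrite pick_prob_setU1 // /pick_prob.
have S_gt0 := sum_pick_weight_gt0 E vV w_gt0.
have S_ge := card_wgt_le_sum i V E.
have kw_gt0 : 0 < #|V|%:R * wgt eps n i.
  by rewrite mulr_gt0 // ltr0n; apply/card_gt0P; exists v.
set d := pick_weight i E v; set b : R := (v \in e)%:R; set w := wgt eps n i.
set S := \sum_(u in V) _; set c : R := (\sum_(u in V) (u \in e))%N%:R.
have c_le2 : c <= 2 by rewrite /c -e2 ler_nat sum_mem_le_card.
have Sc_gt0 : 0 < S + c by rewrite ltr_wpDr ?ler0n.
have -> : d / S = (1 + c / S) * (d / (S + c)) by field; rewrite !gt_eqF.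
apply: ler_pM.
- by rewrite addr_ge0 ?divr_ge0 ?ler0n // ltW.
- by rewrite divr_ge0 ?pick_weight_ge0 // ltW.
- rewrite lerD2l; apply: ler_pM; rewrite ?ler0n //.
    by rewrite invr_ge0 ltW.
  by rewrite lef_pV2 ?posrE.
- by rewrite ler_wpM2r ?lerDl ?ler0n // invr_ge0 ltW.
Qed.

Lemma wgt_gt0 i : (0 < n)%N -> (0 < i)%N -> 0 < wgt eps n i.
Proof.
move=> n_gt0 i_gt0; apply: lt_le_trans (wgt_ge n_gt0 i_gt0).
by rewrite divr_gt0.
Qed.

Lemma alg_prob_setU1_le i V E e s : (0 < i)%N -> e \notin E ->
  alg_prob eps i V (e |: E) s <= (1 + eps / 4) * alg_prob eps i V E s.
Proof.
elim: s i V E => [|v s IH] i V E i_gt0 eE.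
  by rewrite /= mulr1 lerDl divr_ge0 // ltW.
rewrite !alg_prob_cons; case: ifP => vV; last by rewrite mulr0.
have n_gt0 : (0 < n)%N by apply/card_gt0P; exists v.
have step := pick_prob_setU1_le eE vV (wgt_gt0 n_gt0 i_gt0).
rewrite remove_incident_setU1; case: (boolP (v \in e)) => ve.
- rewrite ve in step; rewrite mulrA.
  apply: ler_wpM2r; first exact: alg_prob_ge0.
  apply: le_trans step _; apply: ler_wpM2r; first exact: pick_prob_ge0.
  rewrite lerD2l mul1r -[eps / 4]invf_div.
  by rewrite lef_pV2 ?posrE ?wgt_ge ?wgt_gt0 ?divr_gt0.
- rewrite (negbTE ve) mul0r addr0 mul1r in step.
  rewrite mulrCA; apply: ler_pM; rewrite ?pick_prob_ge0 ?alg_prob_ge0 //.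
  by apply: IH; rewrite ?notin_remove_incident.
Qed.

Lemma alg_prob_le_setU1 i V E e s :
  #|e| = 2%N -> (0 < i)%N -> (#|V| + i = n + 1)%N -> e \notin E ->
  alg_prob eps i V E s <= removal_factor #|V| * alg_prob eps i V (e |: E) s.
Proof.
move=> e2; elim: s i V E => [|v s IH] i V E i_gt0 ViE eE.
  by rewrite /= mulr1 removal_factor_ge1.
rewrite !alg_prob_cons; case: ifP => vV; last by rewrite mulr0.
have n_gt0 : (0 < n)%N by apply/card_gt0P; exists v.
have step := pick_prob_le_setU1 e2 eE vV (wgt_gt0 n_gt0 i_gt0).
rewrite removal_lossE // in step; last by apply/card_gt0P; exists v.
have cardV : #|V| = #|V :\ v|.+1 by rewrite (cardsD1 v V) vV.
rewrite cardV in ViE step *; rewrite removal_factorS remove_incident_setU1.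
case: (boolP (v \in e)) => ve.
- rewrite mulrA; apply: ler_wpM2r; first exact: alg_prob_ge0.
  apply: le_trans step _; apply: ler_wpM2r; first exact: pick_prob_ge0.
  by rewrite ler_peMl ?removal_factor_ge1 // addr_ge0 ?removal_loss_ge0.
- rewrite [_ * (1 + _)]mulrC mulrACA.
  apply: ler_pM; rewrite ?pick_prob_ge0 ?alg_prob_ge0 //.
  by apply: IH; rewrite ?notin_remove_incident //; lia.
Qed.
End Algorithm.

Theorem mainTheorem6 (R : realType) (T : finType) (eps : R) (heps : 0 < eps)
    (A B : {set {set T}}) (hA : is_edge_set A) (hB : is_edge_set B)
    (hAB : exists e, (A :\: B) :|: (B :\: A) = [set e])
    (P : {set #|T|.-tuple T}) :
  alg_Pr eps A P <= expR eps * alg_Pr eps B P.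
Proof.
have [e /symdiff_set1 [[eB ->] | [eA BE]]] := hAB;
  rewrite /alg_Pr mulr_sumr; apply: ler_sum => t _.
- apply: le_trans (alg_prob_setU1_le heps _ _ (ltnSn 0) eB) _.
  apply: ler_wpM2r; first exact: alg_prob_ge0.
  apply: le_trans (expR_ge1Dx _); rewrite lerD2l ler_pdivrMr //; lra.
- have e2 : #|e| = 2%N by apply: hB; rewrite BE setU11.
  have ViE : (#|[set: T]| + 1 = #|T| + 1)%N by rewrite cardsT.
  rewrite BE; apply: le_trans (alg_prob_le_setU1 heps _ e2 (ltnSn 0) ViE eA) _.
  apply: ler_wpM2r; first exact: alg_prob_ge0.
  by rewrite cardsT removal_factor_le_expR.
Qed.
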